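(* The following hold. (1) For every $n\ge 0$, the standard simplex $\Delta^n$ is acyclic. (2) If $X$ is an acyclic simplicial set and $Y\subset X$ is a subsimplicial set, then $Y$ is acyclic. (3) If $\{X_i\}_{i\in I}$ is a family of acyclic simplicial sets, then the product $\prod_{i\in I}X_i$ is acyclic. Consequently (together with (2)), the class of acyclic simplicial sets is closed under all limits in the category of simplicial sets. (4) If $\{X_i\}_{i\in I}$ is a family of acyclic simplicial sets, then the coproduct $\coprod_{i\in I}X_i$ is acyclic. (5) Let $X,Y,Z$ be simplicial sets with $Y$ and $Z$ acyclic, and let $f\colon X\to Y$ and $g\colon X\to Z$ be morphisms. Then the double mapping cylinder $Y\coprod_{X\times\{0\}}(X\times\Delta^1)\coprod_{X\times\{1\}}Z$ (glued along $f$ on $X\times\{0\}$ and along $g$ on $X\times\{1\}$) is acyclic. (6) If $X=\operatorname{colim}_{i\in I}X_i$ is a filtered colimit of simplicial sets and every $X_i$ is acyclic, then $X$ is acyclic.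
   Context: A (directed) graph is $G=(V,E,s,t)$ with sets $V,E$ and maps $s,t\colon E\to V$. A trail is a finite sequence $(e_1,\dots,e_n)$ of edges with $n\ge 1$ and $t(e_i)=s(e_{i+1})$ for $1\le i\le n-1$; it is closed if $s(e_1)=t(e_n)$. A graph is acyclic if it has no closed trail. For a simplicial set $X$, its associated graph $G_X$ has vertex set $X_0$, edge set the set of non-degenerate $1$-simplices of $X$, source $d_1$ and target $d_0$. A simplicial set $X$ is called acyclic if $G_X$ is acyclic (this is a purely combinatorial notion, unrelated to homology). *)

From mathcomp Require Import all_boot.
From Stdlib Require Import ProofIrrelevance FunctionalExtensionality.

Set Implicit Arguments.
Unset Strict Implicit.
Unset Printing Implicit Defensive.

(* The simplex category: objects [n] = {0,...,n} = 'I_n.+1,            *)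

Definition monob m n (f : {ffun 'I_m.+1 -> 'I_n.+1}) : bool :=
  [forall i : 'I_m.+1, forall j : 'I_m.+1, (i <= j) ==> (f i <= f j)].

Definition Dmap (m n : nat) := {f : {ffun 'I_m.+1 -> 'I_n.+1} | monob f}.

Lemma monoP m n (f : Dmap m n) (i j : 'I_m.+1) :
  i <= j -> val f i <= val f j.
Proof. by move: (valP f) => /forallP/(_ i)/forallP/(_ j)/implyP. Qed.

Lemma did_proof n : monob [ffun i : 'I_n.+1 => i].
Proof. by apply/forallP => i; apply/forallP => j; rewrite !ffunE; apply/implyP. Qed.

Definition did n : Dmap n n := exist (fun f => monob f) _ (did_proof n).

Lemma dcomp_proof m n p (g : Dmap n p) (f : Dmap m n) :
  monob [ffun i => val g (val f i)].
Proof.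
apply/forallP => i; apply/forallP => j; rewrite !ffunE; apply/implyP => hij.
by apply: monoP; apply: monoP.
Qed.

Definition dcomp m n p (g : Dmap n p) (f : Dmap m n) : Dmap m p :=
  exist (fun f => monob f) _ (dcomp_proof g f).

Lemma dconst_proof m n (k : 'I_n.+1) : monob [ffun _ : 'I_m.+1 => k].
Proof. by apply/forallP => i; apply/forallP => j; rewrite !ffunE leqnn implybT. Qed.

Definition dconst m n (k : 'I_n.+1) : Dmap m n := exist (fun f => monob f) _ (dconst_proof m k).

Lemma Dmap_eq m n (f g : Dmap m n) : (forall i, val f i = val g i) -> f = g.
Proof. by move=> h; apply: val_inj; apply/ffunP. Qed.

Lemma dcomp_id_r m n (g : Dmap m n) : dcomp g (did m) = g.
Proof. by apply: Dmap_eq => i; rewrite /= !ffunE. Qed.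

Lemma dcomp_assoc m n p q (h : Dmap p q) (g : Dmap n p) (f : Dmap m n) :
  dcomp h (dcomp g f) = dcomp (dcomp h g) f.
Proof. by apply: Dmap_eq => i; rewrite /= !ffunE. Qed.

Lemma dcomp_const_l m n p (k : 'I_p.+1) (f : Dmap m n) :
  dcomp (dconst n k) f = dconst m k.
Proof. by apply: Dmap_eq => i; rewrite /= !ffunE. Qed.

Record sSet := SSet {
  sob : nat -> Type;
  sact : forall m n, Dmap m n -> sob n -> sob m;
  sact_id : forall n (x : sob n), sact (did n) x = x;
  sact_comp : forall m n p (f : Dmap m n) (g : Dmap n p) (x : sob p),
      sact (dcomp g f) x = sact f (sact g x)
}.
Arguments sact : clear implicits.
Arguments sact X {m n} f x : rename.

Record sMap (X Y : sSet) := SMap {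
  smap :> forall n, sob X n -> sob Y n;
  smap_nat : forall m n (f : Dmap m n) (x : sob X n),
      smap (sact X f x) = sact Y f (smap x)
}.
Arguments smap : clear implicits.
Arguments smap {X Y} s n x : rename.

Record graph := Graph {
  gV : Type;
  gE : Type;
  gs : gE -> gV;
  gt : gE -> gV
}.

Fixpoint gchain (G : graph) (e : gE G) (es : seq (gE G)) : Prop :=
  match es with
  | [::] => True
  | e' :: es' => gt e = gs e' /\ gchain e' es'
  end.

Definition closed_trail (G : graph) (e : gE G) (es : seq (gE G)) : Prop :=
  gchain e es /\ gs e = gt (last e es).

Definition graph_acyclic (G : graph) : Prop :=
  forall (e : gE G) (es : seq (gE G)), ~ closed_trail e es.

Definition s0 (X : sSet) (v : sob X 0) : sob X 1 := sact X (dconst 1 (ord0 : 'I_1)) v.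
(* d_1 omits vertex 1, i.e. is induced by [0] -> [1], 0 |-> 0 *)
Definition d1 (X : sSet) (e : sob X 1) : sob X 0 := sact X (dconst 0 (ord0 : 'I_2)) e.
(* d_0 omits vertex 0, i.e. is induced by [0] -> [1], 0 |-> 1 *)
Definition d0 (X : sSet) (e : sob X 1) : sob X 0 := sact X (dconst 0 (ord_max : 'I_2)) e.

Definition nondegenerate1 (X : sSet) (e : sob X 1) : Prop :=
  ~ exists v : sob X 0, e = s0 v.

Definition assoc_graph (X : sSet) : graph :=
  @Graph (sob X 0) {e : sob X 1 | nondegenerate1 e}
         (fun e => d1 (proj1_sig e)) (fun e => d0 (proj1_sig e)).

Definition sacyclic (X : sSet) : Prop := graph_acyclic (assoc_graph X).

Definition Delta (n : nat) : sSet.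
Proof.
refine (@SSet (fun m => Dmap m n) (fun m p f g => dcomp g f) _ _).
- by move=> m g; rewrite dcomp_id_r.
- by move=> m p q f g h; rewrite dcomp_assoc.
Defined.

Record subsSet (X : sSet) := SubsSet {
  spred : forall n, sob X n -> Prop;
  spred_closed : forall m n (f : Dmap m n) (x : sob X n),
      spred x -> spred (sact X f x)
}.

Lemma sig_eqP (A : Type) (P : A -> Prop) (x y : {a | P a}) :
  proj1_sig x = proj1_sig y -> x = y.
Proof.
case: x => a pa; case: y => b pb /= eab; subst b; f_equal; apply: proof_irrelevance.
Qed.

Definition sub_sSet (X : sSet) (Y : subsSet X) : sSet.
Proof.
refine (@SSet (fun n => {x : sob X n | spred Y x})
          (fun m n f x => exist _ (sact X f (proj1_sig x))
                                  (spred_closed f (proj2_sig x))) _ _).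
- by move=> n x; apply: sig_eqP; rewrite /= sact_id.
- by move=> m n p f g x; apply: sig_eqP; rewrite /= sact_comp.
Defined.

Definition prod_sSet (I : Type) (X : I -> sSet) : sSet.
Proof.
refine (@SSet (fun n => forall i : I, sob (X i) n)
          (fun m n f x => fun i => sact (X i) f (x i)) _ _).
- by move=> n x; apply: functional_extensionality_dep => i; rewrite sact_id.
- by move=> m n p f g x; apply: functional_extensionality_dep => i; rewrite sact_comp.
Defined.

Definition coprod_sSet (I : Type) (X : I -> sSet) : sSet.
Proof.
refine (@SSet (fun n => {i : I & sob (X i) n})
          (fun m n f x => existT _ (projT1 x) (sact (X (projT1 x)) f (projT2 x))) _ _).
- by move=> n [i x] /=; rewrite sact_id.
- by move=> m n p f g [i x] /=; rewrite sact_comp.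
Defined.

Definition prod2 (X Y : sSet) : sSet.
Proof.
refine (@SSet (fun n => (sob X n * sob Y n)%type)
          (fun m n f x => (sact X f x.1, sact Y f x.2)) _ _).
- by move=> n [x y] /=; rewrite !sact_id.
- by move=> m n p f g [x y] /=; rewrite !sact_comp.
Defined.

Definition cyl_end (X : sSet) (k : 'I_2) : sMap X (prod2 X (Delta 1)).
Proof.
refine (@SMap X (prod2 X (Delta 1)) (fun n x => (x, dconst n k)) _).
by move=> m n f x /=; rewrite dcomp_const_l.
Defined.

(* Double mapping cylinder, via its universal property:                *)
(* P is the colimit of  Y <-f- X x{0} -> X x Delta^1 <- X x{1} -g-> Z  *)

Definition is_double_mapping_cylinder (X Y Z : sSet) (f : sMap X Y) (g : sMap X Z)
    (P : sSet) (jY : sMap Y P) (jZ : sMap Z P) (jC : sMap (prod2 X (Delta 1)) P) : Prop :=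
  (forall n (x : sob X n), jC n (cyl_end X ord0 n x) = jY n (f n x)) /\
  (forall n (x : sob X n), jC n (cyl_end X ord_max n x) = jZ n (g n x)) /\
  (forall (W : sSet) (a : sMap Y W) (b : sMap Z W) (c : sMap (prod2 X (Delta 1)) W),
     (forall n (x : sob X n), c n (cyl_end X ord0 n x) = a n (f n x)) ->
     (forall n (x : sob X n), c n (cyl_end X ord_max n x) = b n (g n x)) ->
     (exists h : sMap P W,
        (forall n y, h n (jY n y) = a n y) /\
        (forall n z, h n (jZ n z) = b n z) /\
        (forall n w, h n (jC n w) = c n w)) /\
     (forall h h' : sMap P W,
        (forall n y, h n (jY n y) = a n y) ->
        (forall n z, h n (jZ n z) = b n z) ->
        (forall n w, h n (jC n w) = c n w) ->
        (forall n y, h' n (jY n y) = a n y) ->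
        (forall n z, h' n (jZ n z) = b n z) ->
        (forall n w, h' n (jC n w) = c n w) ->
        forall n p, h n p = h' n p)).

Record Cat := MkCat {
  cob : Type;
  chom : cob -> cob -> Type;
  cid : forall i, chom i i;
  ccomp : forall i j k, chom j k -> chom i j -> chom i k;
  ccomp_id_l : forall i j (u : chom i j), ccomp (cid j) u = u;
  ccomp_id_r : forall i j (u : chom i j), ccomp u (cid i) = u;
  ccomp_assoc : forall i j k l (w : chom k l) (v : chom j k) (u : chom i j),
      ccomp w (ccomp v u) = ccomp (ccomp w v) u
}.
Arguments ccomp : clear implicits.
Arguments ccomp C {i j k} v u : rename.
Arguments cid : clear implicits.
Arguments cid C i : rename.
Arguments chom : clear implicits.
Arguments chom C i j : rename.

Record sDiagram (J : Cat) := SDiagram {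
  dob : cob J -> sSet;
  dmor : forall i j, chom J i j -> sMap (dob i) (dob j);
  dmor_id : forall i n (x : sob (dob i) n), dmor (cid J i) n x = x;
  dmor_comp : forall i j k (v : chom J j k) (u : chom J i j) n (x : sob (dob i) n),
      dmor (ccomp J v u) n x = dmor v n (dmor u n x)
}.
Arguments dmor : clear implicits.
Arguments dmor {J} D {i j} u : rename.

Definition is_cocone (J : Cat) (D : sDiagram J) (X : sSet)
    (c : forall i, sMap (dob D i) X) : Prop :=
  forall i j (u : chom J i j) n (x : sob (dob D i) n), c j n (dmor D u n x) = c i n x.

Definition is_colimit (J : Cat) (D : sDiagram J) (X : sSet)
    (c : forall i, sMap (dob D i) X) : Prop :=
  is_cocone c /\
  forall (W : sSet) (k : forall i, sMap (dob D i) W), is_cocone k ->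
    (exists h : sMap X W, forall i n x, h n (c i n x) = k i n x) /\
    (forall h h' : sMap X W,
        (forall i n x, h n (c i n x) = k i n x) ->
        (forall i n x, h' n (c i n x) = k i n x) ->
        forall n x, h n x = h' n x).

Definition is_cone (J : Cat) (D : sDiagram J) (L : sSet)
    (p : forall i, sMap L (dob D i)) : Prop :=
  forall i j (u : chom J i j) n (x : sob L n), dmor D u n (p i n x) = p j n x.

Definition is_limit (J : Cat) (D : sDiagram J) (L : sSet)
    (p : forall i, sMap L (dob D i)) : Prop :=
  is_cone p /\
  forall (W : sSet) (q : forall i, sMap W (dob D i)), is_cone q ->
    (exists h : sMap W L, forall i n x, p i n (h n x) = q i n x) /\
    (forall h h' : sMap W L,
        (forall i n x, p i n (h n x) = q i n x) ->
        (forall i n x, p i n (h' n x) = q i n x) ->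
        forall n x, h n x = h' n x).

Definition filtered (J : Cat) : Prop :=
  inhabited (cob J) /\
  (forall i j : cob J, exists k, inhabited (chom J i k) /\ inhabited (chom J j k)) /\
  (forall i j (u v : chom J i j), exists k (w : chom J j k), ccomp J w u = ccomp J w v).

(* Acyclicity of X says that the relation "some nondegenerate edge goes from u
   to w" on X_0 has an irreflexive transitive closure.  A cycle through an edge
   that stays nondegenerate under a map X -> Y maps to a cycle of Y, so
   acyclicity is reflected by any family of maps jointly reflecting
   nondegeneracy of edges, e.g. jointly injective ones (subobjects, products,
   limits via Yoneda).  Nondegenerate edges of Delta^n strictly increase the
   vertex, and a cycle of a coproduct stays in one summand.  Collapsing Z,
   resp. Y, to a point maps a double mapping cylinder P to the cone on Y,
   resp. Z, and these two maps jointly reflect nondegeneracy; a cone on an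
   acyclic Y is acyclic, since its projection to Delta^1 is monotone on edges
   and its horizontal edges come from Y.  Finally a filtered colimit is jointly
   surjective and identifies two simplices only if they agree further along the
   diagram, so a cycle of the colimit lifts edge by edge to some X_i. *)

From mathcomp Require Import all_boot.
From Stdlib Require Import Classical FunctionalExtensionality PropExtensionality Relations Eqdep.

Set Implicit Arguments.
Unset Strict Implicit.
Unset Printing Implicit Defensive.

Lemma clos_trans_first_step (A : Type) (R : relation A) (u w : A) :
  clos_trans A R u w -> exists v, R u v /\ clos_refl_trans A R v w.
Proof.
move/clos_trans_t1n_iff; case=> [v Ruv|v {}w Ruv /clos_trans_t1n_iff Cvw].
  by exists v; split=> //; apply: rt_refl.
by exists v; split=> //; apply: clos_t_clos_rt.
Qed.

Lemma clos_trans_map (A B : Type) (R : relation A) (S : relation B) (F : A -> B) :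
  (forall x y, R x y -> S (F x) (F y)) ->
  forall x y, clos_trans A R x y -> clos_trans B S (F x) (F y).
Proof.
move=> RS x y; elim=> [u v /RS|u v w _ Suv _ Svw]; first exact: t_step.
exact: t_trans Suv Svw.
Qed.

Lemma clos_trans_partial_map (A B : Type) (R : relation A) (S : relation B)
    (pi : A -> option B) :
  (forall u w, R u w -> exists a b, [/\ pi u = Some a, pi w = Some b & S a b]) ->
  forall u w, clos_trans A R u w ->
  exists a b, [/\ pi u = Some a, pi w = Some b & clos_trans B S a b].
Proof.
move=> RS u w; elim=> [x y /RS [a [b [-> -> Sab]]]|
                       x y z _ [a [b [-> Eb Cab]]] _ [b' [c [Eb' -> Cbc]]]].
  by exists a, b; split=> //; apply: t_step.
move: Eb; rewrite Eb' => -[Ebb]; subst b'.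
by exists a, c; split=> //; apply: t_trans Cab Cbc.
Qed.

Definition edge (X : sSet) (u w : sob X 0) : Prop :=
  exists e : sob X 1, [/\ nondegenerate1 e, d1 e = u & d0 e = w].
Arguments edge : clear implicits.

Lemma dconst00 (k : 'I_1) : dconst 0 k = did 0.
Proof. by apply: Dmap_eq => i; rewrite /= !ffunE !ord1. Qed.

Lemma d1s0 (X : sSet) (v : sob X 0) : d1 (s0 v) = v.
Proof. by rewrite /d1 /s0 -sact_comp dcomp_const_l dconst00 sact_id. Qed.

Lemma d0s0 (X : sSet) (v : sob X 0) : d0 (s0 v) = v.
Proof. by rewrite /d0 /s0 -sact_comp dcomp_const_l dconst00 sact_id. Qed.

Lemma degenerate1E (X : sSet) (e : sob X 1) : ~ nondegenerate1 e -> e = s0 (d1 e).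
Proof. by move=> /NNPP [v ->]; rewrite d1s0. Qed.

Section MapFacts.
Variables (X Y : sSet) (F : sMap X Y).

Lemma smap_s0 v : F 1 (s0 v) = s0 (F 0 v).
Proof. by rewrite /s0 smap_nat. Qed.

Lemma smap_d1 e : F 0 (d1 e) = d1 (F 1 e).
Proof. by rewrite /d1 smap_nat. Qed.

Lemma smap_d0 e : F 0 (d0 e) = d0 (F 1 e).
Proof. by rewrite /d0 smap_nat. Qed.

Lemma smap_degenerate1 e : ~ nondegenerate1 (F 1 e) -> F 1 e = F 1 (s0 (d1 e)).
Proof. by move/degenerate1E=> ->; rewrite smap_s0 smap_d1. Qed.

Lemma nondegenerate1_smap e : nondegenerate1 (F 1 e) -> nondegenerate1 e.
Proof. by move=> nF [v ev]; apply: nF; exists (F 0 v); rewrite ev smap_s0. Qed.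

Lemma smap_nondegenerate1 e :
  injective (F 1) -> nondegenerate1 e -> nondegenerate1 (F 1 e).
Proof.
move=> injF ne nF; apply: ne; exists (d1 e).
exact/injF/smap_degenerate1.
Qed.

End MapFacts.

Lemma jointly_injective_nondegenerate1 (X : sSet) (I : Type) (Y : I -> sSet)
    (p : forall i, sMap X (Y i)) :
  (forall e e' : sob X 1, (forall i, p i 1 e = p i 1 e') -> e = e') ->
  forall e, nondegenerate1 e -> exists i, nondegenerate1 (p i 1 e).
Proof.
move=> injp e ne; apply: NNPP => allF; apply: ne; exists (d1 e).
by apply: injp => i; apply: smap_degenerate1 => nF; apply: allF; exists i.
Qed.

(** * Acyclicity criteria *)

Lemma gchain_clos_trans (X : sSet) (e : gE (assoc_graph X)) es :
  gchain e es -> clos_trans _ (edge X) (gs e) (gt (last e es)).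
Proof.
have edge_e (e' : gE (assoc_graph X)) : edge X (gs e') (gt e').
  by exists (proj1_sig e'); split=> //; apply: (proj2_sig e').
elim: es e => [|e' es IH] e; first by move=> _; apply: t_step (edge_e e).
move=> [te Ces]; apply: t_trans (t_step _ _ _ _ (edge_e e)) _.
by rewrite te; apply: IH.
Qed.

Lemma clos_trans_gchain (X : sSet) u w : clos_trans _ (edge X) u w ->
  exists (e : gE (assoc_graph X)) es, [/\ gchain e es, gs e = u & gt (last e es) = w].
Proof.
move/clos_trans_t1n_iff.
elim=> [x y [e [ne <- <-]]|x y z [e [ne <- ey]] _ [e' [es [Ces e'y <-]]]].
  by exists (exist _ e ne), [::].
by exists (exist _ e ne), (e' :: es); split=> //; split=> //; rewrite e'y.
Qed.

Lemma sacyclic_iff (X : sSet) : sacyclic X <-> forall v, ~ clos_trans _ (edge X) v v.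
Proof.
split=> [acX v /clos_trans_gchain [e [es [Ces ev lv]]]|noCyc e es [Ces se]].
  by apply: (acX e es); split; rewrite // ev lv.
by apply: (noCyc (gs e)); rewrite {2}se; apply: gchain_clos_trans.
Qed.

Lemma sacyclic_no_cycle (X : sSet) : sacyclic X -> forall v, ~ clos_trans _ (edge X) v v.
Proof. exact: (sacyclic_iff X).1. Qed.

Lemma simplex1_rt (X : sSet) (e : sob X 1) : clos_refl_trans _ (edge X) (d1 e) (d0 e).
Proof.
have [ne|/degenerate1E ->] := classic (nondegenerate1 e); first by apply: rt_step; exists e.
by rewrite d1s0 d0s0; apply: rt_refl.
Qed.

Lemma smap_rt (X Y : sSet) (F : sMap X Y) u w :
  clos_refl_trans _ (edge X) u w -> clos_refl_trans _ (edge Y) (F 0 u) (F 0 w).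
Proof.
elim=> [x y [e [_ <- <-]]|x|x y z _ Cxy _ Cyz]; last 2 first.
- exact: rt_refl.
- exact: rt_trans Cxy Cyz.
by rewrite !smap_d1 !smap_d0; apply: simplex1_rt.
Qed.

Lemma sacyclic_of_height (X : sSet) (h : sob X 0 -> nat) :
  (forall u w, edge X u w -> h u < h w) -> sacyclic X.
Proof.
move=> hE; apply/sacyclic_iff => v Cvv.
suff hC x y : clos_trans _ (edge X) x y -> h x < h y by have := hC _ _ Cvv; rewrite ltnn.
elim=> {x y} [x y /hE //|x y z _ hxy _ hyz]; exact: ltn_trans hxy hyz.
Qed.

Lemma sacyclic_of_jointly_nondegenerate1 (X : sSet) (I : Type) (Y : I -> sSet)
    (p : forall i, sMap X (Y i)) :
  (forall i, sacyclic (Y i)) ->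
  (forall e, nondegenerate1 e -> exists i, nondegenerate1 (p i 1 e)) -> sacyclic X.
Proof.
move=> acY pnd; apply/sacyclic_iff => v Cvv.
have [w [[e [ne ev ew]] Cwv]] := clos_trans_first_step Cvv.
have [i nde] := pnd e ne.
apply: (sacyclic_no_cycle (acY i) (v := p i 0 w)); apply: clos_rt_t (smap_rt (p i) Cwv) _.
by apply: t_step; exists (p i 1 e); rewrite -smap_d1 -smap_d0 ev ew.
Qed.

Lemma sacyclic_of_jointly_injective (X : sSet) (I : Type) (Y : I -> sSet)
    (p : forall i, sMap X (Y i)) :
  (forall i, sacyclic (Y i)) ->
  (forall e e' : sob X 1, (forall i, p i 1 e = p i 1 e') -> e = e') -> sacyclic X.
Proof.
move=> acY /jointly_injective_nondegenerate1 pnd.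
exact: sacyclic_of_jointly_nondegenerate1 acY pnd.
Qed.

Definition vertical_edge (X B : sSet) (F : sMap X B) (u w : sob X 0) : Prop :=
  exists e : sob X 1, [/\ nondegenerate1 e, ~ nondegenerate1 (F 1 e), d1 e = u & d0 e = w].

Lemma vertical_edge_fibre (X B : sSet) (F : sMap X B) u w :
  clos_trans _ (vertical_edge F) u w -> F 0 u = F 0 w.
Proof.
elim=> [x y [e [_ /degenerate1E nF <- <-]]|x y z _ -> _ //].
by rewrite !smap_d1 !smap_d0 nF d1s0 d0s0.
Qed.

Lemma sacyclic_fibred (X B : sSet) (F : sMap X B) :
  sacyclic B -> (forall v, ~ clos_trans _ (vertical_edge F) v v) -> sacyclic X.
Proof.
move=> /sacyclic_iff acB acV; apply/sacyclic_iff => v.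
suff: forall u w, clos_trans _ (edge X) u w ->
    clos_trans _ (vertical_edge F) u w \/ clos_trans _ (edge B) (F 0 u) (F 0 w).
  by move=> split_path /split_path [/acV|/acB].
move=> u w; elim=> [x y [e [ne <- <-]]|x y z _ [Vxy|Bxy] _ [Vyz|Byz]].
- have [nF|nF] := classic (nondegenerate1 (F 1 e)).
    by right; apply: t_step; exists (F 1 e); rewrite -smap_d1 -smap_d0.
  by left; apply: t_step; exists e.
- by left; apply: t_trans Vxy Vyz.
- by right; rewrite (vertical_edge_fibre Vxy).
- by right; rewrite -(vertical_edge_fibre Vyz).
- by right; apply: t_trans Bxy Byz.
Qed.

Lemma ord2_cases (i : 'I_2) : i = ord0 \/ i = ord_max.
Proof. by case: i => [[|[|//]] ?]; [left|right]; apply: val_inj. Qed.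

Lemma Dmap1_const n (e : Dmap 1 n) :
  val e ord0 = val e ord_max -> e = dconst 1 (val e ord0).
Proof.
by move=> e01; apply: Dmap_eq => i; rewrite /= ffunE; case: (ord2_cases i) => ->.
Qed.

Lemma Delta_nondegenerate1 n (e : Dmap 1 n) :
  @nondegenerate1 (Delta n) e <-> val e ord0 != val e ord_max.
Proof.
split=> [ne|ne01 [v ev]].
  apply/eqP => /Dmap1_const e_const; apply: ne; exists (dconst 0 (val e ord0)).
  by rewrite {1}e_const /s0 /= dcomp_const_l.
by move: ne01; rewrite ev /= !ffunE eqxx.
Qed.

Lemma Delta_sacyclic n : sacyclic (Delta n).
Proof.
apply: (@sacyclic_of_height (Delta n) (fun v : Dmap 0 n => nat_of_ord (val v ord0))).
move=> u w [e [/Delta_nondegenerate1 ne <- <-]] /=; rewrite !ffunE.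
by rewrite ltn_neqAle ne monoP.
Qed.

Definition sub_incl (X : sSet) (Y : subsSet X) : sMap (sub_sSet Y) X :=
  @SMap (sub_sSet Y) X (fun n x => proj1_sig x) (fun m n f x => erefl).

Lemma sub_sSet_sacyclic (X : sSet) (Y : subsSet X) : sacyclic X -> sacyclic (sub_sSet Y).
Proof.
move=> acX; apply: (@sacyclic_of_jointly_injective _ unit _ (fun _ => sub_incl Y)) => //.
by move=> e e' /(_ tt); apply: sig_eqP.
Qed.

Definition prod_proj (I : Type) (X : I -> sSet) (i : I) : sMap (prod_sSet X) (X i) :=
  @SMap (prod_sSet X) (X i) (fun n x => x i) (fun m n f x => erefl).

Lemma prod_sSet_sacyclic (I : Type) (X : I -> sSet) :
  (forall i, sacyclic (X i)) -> sacyclic (prod_sSet X).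
Proof.
move=> acX; apply: (sacyclic_of_jointly_injective (p := prod_proj X)) => // e e' ee'.
exact: functional_extensionality_dep.
Qed.

Definition scomp (X Y Z : sSet) (g : sMap Y Z) (f : sMap X Y) : sMap X Z.
Proof. by apply: (@SMap X Z (fun n x => g n (f n x))) => m n h x; rewrite !smap_nat. Defined.

Definition yoneda (L : sSet) n (x : sob L n) : sMap (Delta n) L.
Proof.
by apply: (@SMap (Delta n) L (fun m f => sact L f x)) => m p h f /=; rewrite sact_comp.
Defined.

Lemma limit_sacyclic (J : Cat) (D : sDiagram J) (L : sSet)
    (p : forall i, sMap L (dob D i)) :
  (forall i, sacyclic (dob D i)) -> is_limit p -> sacyclic L.
Proof.
move=> acD [p_cone p_univ]; apply: (sacyclic_of_jointly_injective (p := p) acD) => x y pxy.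
have x_cone : is_cone (fun i => scomp (p i) (yoneda x)) by move=> i j u n f /=; rewrite p_cone.
have [_ uniq] := p_univ _ _ x_cone.
have := uniq (yoneda x) (yoneda y) (fun _ _ _ => erefl) _ 1 (did 1).
by rewrite /= !sact_id; apply=> i n f /=; rewrite !smap_nat pxy.
Qed.

Definition coprod_in (I : Type) (X : I -> sSet) (i : I) : sMap (X i) (coprod_sSet X) :=
  @SMap (X i) (coprod_sSet X) (fun n x => existT _ i x) (fun m n f x => erefl).

Lemma coprod_path (I : Type) (X : I -> sSet) (a b : sob (coprod_sSet X) 0) :
  clos_trans _ (edge (coprod_sSet X)) a b ->
  exists i x y, [/\ a = existT _ i x, b = existT _ i y & clos_trans _ (edge (X i)) x y].
Proof.
elim=> [_ _ [[i e] [ne <- <-]]|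
        u v w _ [i [x [y [-> Ev Cxy]]]] _ [j [y' [z [Ev' -> Cyz]]]]].
  exists i, (d1 e), (d0 e); split=> //; apply: t_step; exists e; split=> //.
  by move=> [v ev]; apply: ne; exists (existT _ i v); rewrite ev.
move: Ev'; rewrite Ev => Eyy'; have /= ij := congr1 (@projT1 _ _) Eyy'; subst j.
have yy' := inj_pair2 _ _ _ _ _ Eyy'; subst y'.
by exists i, x, z; split=> //; apply: t_trans Cxy Cyz.
Qed.

Lemma coprod_sSet_sacyclic (I : Type) (X : I -> sSet) :
  (forall i, sacyclic (X i)) -> sacyclic (coprod_sSet X).
Proof.
move=> acX; apply/sacyclic_iff => a Caa.
have [i [x [y [-> Exy Cxy]]]] := coprod_path Caa.
have xy := inj_pair2 _ _ _ _ _ Exy; subst y.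
exact: (sacyclic_no_cycle (acX i) Cxy).
Qed.

(** * Epimorphisms are surjective *)

Section Doubling.
Variables (P : sSet) (S : subsSet P).

(* [P] glued to a second copy of itself along [S]: outside [S] the [Prop]
   component tells the two copies apart, inside [S] it is forced to be [False]. *)
Definition double_ob n := {p : sob P n * Prop | spred S p.1 -> ~ p.2}.

Definition double_pt n (x : sob P n) (Q : Prop) (hQ : spred S x -> ~ Q) : double_ob n :=
  exist (fun p : sob P n * Prop => spred S p.1 -> ~ p.2) (x, Q) hQ.

Definition double_act m n (f : Dmap m n) (p : double_ob n) : double_ob m :=
  @double_pt m (sact P f (proj1_sig p).1)
    ((proj1_sig p).2 /\ ~ spred S (sact P f (proj1_sig p).1)) (fun s '(conj _ ns) => ns s).

Definition doubling : sSet.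
Proof.
apply: (@SSet double_ob double_act).
- move=> n [[x Q] hQ]; apply: sig_eqP; rewrite /= sact_id; congr pair.
  by apply: propositional_extensionality; split=> [[]//|q]; split=> // /hQ.
- move=> m n p f g [[x Q] hQ]; apply: sig_eqP; rewrite /= sact_comp; congr pair.
  apply: propositional_extensionality; split=> [[q nS]|[[q _] nS]]; split=> //.
  by split=> // /(spred_closed f).
Defined.

Definition double_fst : sMap P doubling.
Proof.
apply: (@SMap P doubling (fun n x => @double_pt n x False (fun _ F => F))) => m n f x.
by apply: sig_eqP; congr pair; apply: propositional_extensionality; split=> [|[]].
Defined.

Definition double_snd : sMap P doubling.
Proof.
apply: (@SMap P doubling (fun n x => @double_pt n x (~ spred S x) (fun s ns => ns s))).
move=> m n f x; apply: sig_eqP; congr pair; apply: propositional_extensionality.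
by split=> [nS|[]//]; split=> // /(spred_closed f).
Defined.

Lemma double_fst_snd n (x : sob P n) : double_fst n x = double_snd n x -> spred S x.
Proof. by move=> /(congr1 (fun p => (proj1_sig p).2)) /= FnS; apply: NNPP; rewrite -FnS. Qed.

Lemma subsSet_full_of_epi :
  (forall W (h h' : sMap P W), (forall n x, spred S x -> h n x = h' n x) ->
     forall n x, h n x = h' n x) ->
  forall n (x : sob P n), spred S x.
Proof.
move=> epi n x; apply/double_fst_snd/epi => {n x} n x Sx.
apply: sig_eqP; congr pair; apply: propositional_extensionality.
by split=> [[]|/(_ Sx)].
Qed.

End Doubling.

(** * Cones *)

Section Cone.
Variables (Y : sSet) (apex : 'I_2).

Definition at_apex n (s : Dmap n 1) : bool := [forall i, val s i == apex].

Lemma at_apex_comp m n (s : Dmap n 1) (f : Dmap m n) : at_apex s -> at_apex (dcomp s f).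
Proof. by move=> /forallP s_apex; apply/forallP => i; rewrite /= ffunE. Qed.

Lemma at_apex_dconst n k : at_apex (dconst n k) = (k == apex).
Proof. by apply/forallP/idP => [/(_ ord0)|k_apex i]; rewrite /= ffunE. Qed.

Lemma at_apexE n (s : Dmap n 1) : at_apex s -> s = dconst n apex.
Proof. by move=> /forallP s_apex; apply: Dmap_eq => i; rewrite /= ffunE; apply/eqP. Qed.

(* The pushout of [Y x Delta^1 <- Y x {apex} -> Delta^0]: [None] is the apex
   simplex, all other simplices of [Y x Delta^1] are kept. *)
Definition cone_ob n := option {p : Dmap n 1 * sob Y n | ~~ at_apex p.1}.

Definition cone_simplex n (s : Dmap n 1) (y : sob Y n) : cone_ob n := insub (s, y).

Definition cone_act m n (f : Dmap m n) (t : cone_ob n) : cone_ob m :=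
  if t is Some p then cone_simplex (dcomp (val p).1 f) (sact Y f (val p).2) else None.

Lemma cone_act_simplex m n (f : Dmap m n) s y :
  cone_act f (cone_simplex s y) = cone_simplex (dcomp s f) (sact Y f y).
Proof.
rewrite /cone_simplex; case: insubP => [p _ /= ->//|/negbNE s_apex].
by rewrite insubN //= negbK at_apex_comp.
Qed.

Lemma cone_simplex_val n (p : {p : Dmap n 1 * sob Y n | ~~ at_apex p.1}) :
  cone_simplex (val p).1 (val p).2 = Some p.
Proof. by rewrite /cone_simplex -surjective_pairing valK. Qed.

Definition cone : sSet.
Proof.
apply: (@SSet cone_ob cone_act).
- by move=> n [p|] //=; rewrite dcomp_id_r sact_id cone_simplex_val.
- move=> m n p f g [q|] //=.
  by rewrite cone_act_simplex dcomp_assoc sact_comp.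
Defined.

Definition cone_coord n (t : cone_ob n) : Dmap n 1 :=
  if t is Some p then (val p).1 else dconst n apex.

Lemma cone_coord_simplex n s y : cone_coord (@cone_simplex n s y) = s.
Proof.
rewrite /cone_simplex; case: insubP => [q _ /= -> //|/negbNE /= s_apex].
by rewrite (at_apexE s_apex).
Qed.

Definition cone_proj : sMap cone (Delta 1).
Proof.
apply: (@SMap cone (Delta 1) cone_coord) => m n f [p|] /=.
- exact: cone_coord_simplex.
- by rewrite dcomp_const_l.
Defined.

Lemma cone_simplex_nonapex n (s : Dmap n 1) y :
  ~~ at_apex s -> omap val (cone_simplex s y) = Some (s, y).
Proof. by rewrite /cone_simplex => s_apex; rewrite insubT. Qed.

Definition cone_base (k : 'I_2) : sMap Y cone.
Proof.
apply: (@SMap Y cone (fun n y => cone_simplex (dconst n k) y)) => m n f y.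
by rewrite /= cone_act_simplex dcomp_const_l.
Defined.

Definition cone_tip (W : sSet) : sMap W cone :=
  @SMap W cone (fun n _ => None) (fun _ _ _ _ => erefl).

Definition cone_cyl (X : sSet) (F : sMap X Y) : sMap (prod2 X (Delta 1)) cone.
Proof.
apply: (@SMap (prod2 X (Delta 1)) cone (fun n w => cone_simplex w.2 (F n w.1))).
by move=> m n f [x s]; rewrite /= cone_act_simplex smap_nat.
Defined.

Lemma cone_cyl_nondegenerate1 (X : sSet) (F : sMap X Y)
    (w : sob (prod2 X (Delta 1)) 1) :
  val w.2 ord0 != val w.2 ord_max -> nondegenerate1 (cone_cyl F 1 w).
Proof.
move=> /Delta_nondegenerate1 nw; apply: (nondegenerate1_smap (F := cone_proj)).
by rewrite /= cone_coord_simplex.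
Qed.

Lemma cone_base_apex n y : cone_base apex n y = None.
Proof. by rewrite /= /cone_simplex insubN // at_apex_dconst eqxx. Qed.

Lemma cone_base_inj k n : k != apex -> injective (cone_base k n).
Proof.
move=> k_apex y y' /(congr1 (omap val)).
by rewrite /= !cone_simplex_nonapex ?at_apex_dconst // => -[].
Qed.

Definition cone_point (t : sob cone 0) : option (sob Y 0) := omap (fun p => (val p).2) t.

Lemma cone_point_base k y : k != apex -> cone_point (cone_base k 0 y) = Some y.
Proof.
move=> k_apex; have := cone_simplex_nonapex y (s := dconst 0 k).
rewrite at_apex_dconst => /(_ k_apex).
by rewrite /cone_point /=; case: cone_simplex => // p /= [->].
Qed.

Lemma cone_vertical_simplex (e : sob cone 1) :
  nondegenerate1 e -> ~ nondegenerate1 (cone_proj 1 e) ->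
  exists k y, k != apex /\ e = cone_base k 1 y.
Proof.
case: e => [p|] ne; last by case: ne; exists None.
move=> /(contra_notT (proj2 (Delta_nondegenerate1 _))) /eqP /Dmap1_const s_const.
exists (val (val p).1 ord0), (val p).2; split; last by rewrite /= -s_const cone_simplex_val.
by rewrite -(at_apex_dconst 1) -s_const; apply: (valP p).
Qed.

Lemma cone_vertical_edge u w : vertical_edge cone_proj u w ->
  exists yu yw, [/\ cone_point u = Some yu, cone_point w = Some yw & edge Y yu yw].
Proof.
move=> [e [ne nproj <- <-]].
have [k [y [k_apex e_def]]] := cone_vertical_simplex ne nproj; subst e.
exists (d1 y), (d0 y); rewrite -smap_d1 -smap_d0 !cone_point_base //; split=> //.
by exists y; split=> //; apply: nondegenerate1_smap ne.
Qed.

Lemma cone_sacyclic : sacyclic Y -> sacyclic cone.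
Proof.
move=> /sacyclic_iff acY; apply: (sacyclic_fibred (@Delta_sacyclic 1)) => v Cvv.
have [a [b [-> [<-] Cab]]] := clos_trans_partial_map cone_vertical_edge Cvv.
exact: acY Cab.
Qed.

End Cone.

Lemma sacyclic_of_jointly_nondegenerate1_2 (X Y1 Y2 : sSet) (p1 : sMap X Y1) (p2 : sMap X Y2) :
  sacyclic Y1 -> sacyclic Y2 ->
  (forall e, nondegenerate1 e -> nondegenerate1 (p1 1 e) \/ nondegenerate1 (p2 1 e)) ->
  sacyclic X.
Proof.
move=> ac1 ac2 p12; pose p b := if b return sMap X (if b then Y1 else Y2) then p1 else p2.
apply: (sacyclic_of_jointly_nondegenerate1 (p := p)) => [[]//|e /p12 [nd1|nd2]].
- by exists true.
- by exists false.
Qed.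

Section DoubleMappingCylinder.
Variables (X Y Z : sSet) (f : sMap X Y) (g : sMap X Z) (P : sSet).
Variables (jY : sMap Y P) (jZ : sMap Z P) (jC : sMap (prod2 X (Delta 1)) P).
Hypothesis dmc : is_double_mapping_cylinder f g jY jZ jC.

Lemma dmc_end0 n x : jC n (x, dconst n ord0) = jY n (f n x).
Proof. exact: (proj1 dmc). Qed.

Lemma dmc_end1 n x : jC n (x, dconst n ord_max) = jZ n (g n x).
Proof. exact: (proj1 (proj2 dmc)). Qed.

Definition dmc_image : subsSet P.
Proof.
apply: (@SubsSet P (fun n p => [\/ exists y, p = jY n y, exists z, p = jZ n z
                                  | exists w, p = jC n w])).
move=> m n h p [[y ->]|[z ->]|[w ->]]; rewrite -smap_nat.
- by apply: Or31; exists (sact Y h y).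
- by apply: Or32; exists (sact Z h z).
- by apply: Or33; exists (sact _ h w).
Defined.

Lemma dmc_surj n (p : sob P n) :
  [\/ exists y, p = jY n y, exists z, p = jZ n z | exists w, p = jC n w].
Proof.
apply: (@subsSet_full_of_epi P dmc_image) => W h h' hh'.
have [_ uniq] := proj2 (proj2 dmc) W (scomp h jY) (scomp h jZ) (scomp h jC)
  (fun n x => congr1 (h n) (dmc_end0 x)) (fun n x => congr1 (h n) (dmc_end1 x)).
apply: uniq => // m q; symmetry; apply: hh'.
- by apply: Or31; exists q.
- by apply: Or32; exists q.
- by apply: Or33; exists q.
Qed.

Lemma dmc_to_cone0 : exists h : sMap P (cone Y ord_max),
  (forall n y, h n (jY n y) = cone_base Y ord_max ord0 n y) /\
  (forall n w, h n (jC n w) = cone_cyl ord_max f n w).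
Proof.
have [[h [hY [_ hC]]] _] := proj2 (proj2 dmc) _ (cone_base Y ord_max ord0)
  (cone_tip Y ord_max Z) (cone_cyl ord_max f) (fun n x => erefl)
  (fun n x => cone_base_apex ord_max (f n x)).
by exists h.
Qed.

Lemma dmc_to_cone1 : exists h : sMap P (cone Z ord0),
  (forall n z, h n (jZ n z) = cone_base Z ord0 ord_max n z) /\
  (forall n w, h n (jC n w) = cone_cyl ord0 g n w).
Proof.
have [[h [_ [hZ hC]]] _] := proj2 (proj2 dmc) _ (cone_tip Z ord0 Y)
  (cone_base Z ord0 ord_max) (cone_cyl ord0 g)
  (fun n x => cone_base_apex ord0 (g n x)) (fun n x => erefl).
by exists h.
Qed.

Lemma dmc_sacyclic : sacyclic Y -> sacyclic Z -> sacyclic P.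
Proof.
move=> acY acZ; have [hY [hYY hYC]] := dmc_to_cone0; have [hZ [hZZ hZC]] := dmc_to_cone1.
apply: (sacyclic_of_jointly_nondegenerate1_2 (p1 := hY) (p2 := hZ)); try exact: cone_sacyclic.
have ndY y : nondegenerate1 (jY 1 y) -> nondegenerate1 (hY 1 (jY 1 y)).
  move=> /nondegenerate1_smap ny; rewrite hYY.
  exact: smap_nondegenerate1 (cone_base_inj _) ny.
have ndZ z : nondegenerate1 (jZ 1 z) -> nondegenerate1 (hZ 1 (jZ 1 z)).
  move=> /nondegenerate1_smap nz; rewrite hZZ.
  exact: smap_nondegenerate1 (cone_base_inj _) nz.
move=> e ne; case: (dmc_surj e) ne => [[y ->]|[z ->]|[[x s] ->]] ne.
- by left; apply: ndY.
- by right; apply: ndZ.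
have [s01|] := boolP (val s ord0 != val s ord_max).
  by left; rewrite hYC; apply: cone_cyl_nondegenerate1.
move=> /negbNE /eqP /Dmap1_const s_const; move: ne; rewrite s_const.
case: (ord2_cases (val s ord0)) => -> ne.
- by left; move: ne; rewrite dmc_end0; apply: ndY.
- by right; move: ne; rewrite dmc_end1; apply: ndZ.
Qed.

End DoubleMappingCylinder.

(** * Filtered colimits *)

Section Quotient.
Variables (S : sSet) (R : forall n, sob S n -> sob S n -> Prop).
Hypothesis R_refl : forall n (x : sob S n), R x x.
Hypothesis R_sym : forall n (x y : sob S n), R x y -> R y x.
Hypothesis R_trans : forall n (x y z : sob S n), R x y -> R y z -> R x z.
Hypothesis R_act : forall m n (f : Dmap m n) (x y : sob S n),
  R x y -> R (sact S f x) (sact S f y).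

Definition quot_ob n := {C : sob S n -> Prop | exists x : sob S n, C = R x}.

Definition class n (x : sob S n) : quot_ob n := exist _ (R x) (ex_intro _ x erefl).

Lemma quot_ob_class n (C : quot_ob n) : exists x, C = class x.
Proof. by case: C => C [x eC]; exists x; apply: sig_eqP. Qed.

Lemma class_act m n (f : Dmap m n) (x0 : sob S n) :
  (fun y => exists x, R x0 x /\ R (sact S f x) y) = R (sact S f x0).
Proof.
apply: functional_extensionality => y; apply: propositional_extensionality.
split=> [[x [Rx0x Rfxy]]|Rfx0y]; last by exists x0.
exact: R_trans (R_act f Rx0x) Rfxy.
Qed.

Definition quot_act m n (f : Dmap m n) (C : quot_ob n) : quot_ob m.
Proof.
exists (fun y => exists x, proj1_sig C x /\ R (sact S f x) y).
by case: C => C [x0 eC]; exists (sact S f x0); rewrite /= eC class_act.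
Defined.

Lemma quot_act_class m n (f : Dmap m n) (x : sob S n) :
  quot_act f (class x) = class (sact S f x).
Proof. by apply: sig_eqP; rewrite /= class_act. Qed.

Definition quotient : sSet.
Proof.
apply: (@SSet quot_ob quot_act) => [n C|m n p f g C]; have [x ->] := quot_ob_class C.
  by rewrite quot_act_class sact_id.
by rewrite !quot_act_class sact_comp.
Defined.

Definition quot_map : sMap S quotient :=
  @SMap S quotient class (fun m n f x => esym (quot_act_class f x)).

Lemma quot_map_eq n (x y : sob S n) : R x y -> quot_map n x = quot_map n y.
Proof.
move=> Rxy; apply: sig_eqP; apply: functional_extensionality => z.
by apply: propositional_extensionality; split=> [/(R_trans (R_sym Rxy))|/(R_trans Rxy)].
Qed.

Lemma quot_map_eqP n (x y : sob S n) : quot_map n x = quot_map n y -> R x y.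
Proof. by move=> /(congr1 (fun C => proj1_sig C y)) /= ->. Qed.

End Quotient.

Section FilteredColimit.
Variables (J : Cat) (D : sDiagram J).
Hypothesis filtJ : filtered J.

Definition germ_eq n (a b : sob (coprod_sSet (dob D)) n) : Prop :=
  exists k (u : chom J (projT1 a) k) (w : chom J (projT1 b) k),
    dmor D u n (projT2 a) = dmor D w n (projT2 b).

Lemma germ_eq_refl n (a : sob (coprod_sSet (dob D)) n) : germ_eq a a.
Proof. by exists (projT1 a), (cid J _), (cid J _). Qed.

Lemma germ_eq_sym n (a b : sob (coprod_sSet (dob D)) n) : germ_eq a b -> germ_eq b a.
Proof. by move=> [k [u [w uw]]]; exists k, w, u. Qed.

Lemma germ_eq_trans n (a b c : sob (coprod_sSet (dob D)) n) :
  germ_eq a b -> germ_eq b c -> germ_eq a c.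
Proof.
move=> [k1 [u1 [w1 E1]]] [k2 [u2 [w2 E2]]]; case: filtJ => _ [upper coeq].
have [k3 [[r1] [r2]]] := upper k1 k2.
have [k [s r_eq]] := coeq _ _ (ccomp J r1 w1) (ccomp J r2 u2).
exists k, (ccomp J s (ccomp J r1 u1)), (ccomp J s (ccomp J r2 w2)).
rewrite !dmor_comp E1 -E2 -!dmor_comp.
by rewrite -!ccomp_assoc r_eq.
Qed.

Lemma germ_eq_act m n (f : Dmap m n) (a b : sob (coprod_sSet (dob D)) n) :
  germ_eq a b -> germ_eq (sact _ f a) (sact _ f b).
Proof. by move=> [k [u [w uw]]]; exists k, u, w; rewrite /= !smap_nat uw. Qed.

Variables (X : sSet) (c : forall i, sMap (dob D i) X).
Hypothesis colim : is_colimit c.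

Lemma colimit_dmor i j (u : chom J i j) n (x : sob (dob D i) n) :
  c j n (dmor D u n x) = c i n x.
Proof. exact: (proj1 colim). Qed.

Lemma colimit_germ_eq n i j (x : sob (dob D i) n) (y : sob (dob D j) n) :
  c i n x = c j n y -> germ_eq (existT _ i x) (existT _ j y).
Proof.
pose q i := scomp (quot_map germ_eq_refl germ_eq_trans germ_eq_act) (coprod_in _ i).
have q_cocone : is_cocone q.
  move=> i' j' u m x'.
  have g : germ_eq (existT _ j' (dmor D u m x')) (existT _ i' x').
    by exists j', (cid J j'), u; rewrite /= dmor_id.
  exact: (quot_map_eq germ_eq_refl germ_eq_sym germ_eq_trans germ_eq_act g).
have [[h hc] _] := proj2 colim _ _ q_cocone.
move=> cxy; apply: (quot_map_eqP (R_refl := germ_eq_refl) (R_trans := germ_eq_trans)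
                                  (R_act := germ_eq_act)).
by have /= <- := hc i n x; have /= <- := hc j n y; rewrite cxy.
Qed.

Definition colimit_image : subsSet X.
Proof.
apply: (@SubsSet X (fun n p => exists i x, p = c i n x)) => m n f _ [i [x ->]].
by exists i, (sact _ f x); rewrite smap_nat.
Defined.

Lemma colimit_surj n (p : sob X n) : exists i x, p = c i n x.
Proof.
apply: (@subsSet_full_of_epi X colimit_image) => W h h' hh'.
have [_ uniq] := proj2 colim W (fun i => scomp h (c i))
  (fun i j u m x => congr1 (h m) (colimit_dmor u x)).
by apply: uniq => // i m x; symmetry; apply: hh'; exists i, x.
Qed.

(* Unlike the nondegenerate edges of [D k], these are preserved by the
   transition maps of the diagram. *)
Definition colimit_edge k (s t : sob (dob D k) 0) : Prop :=
  exists e, [/\ nondegenerate1 (c k 1 e), d1 e = s & d0 e = t].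

Lemma colimit_edge_dmor k l (u : chom J k l) s t :
  colimit_edge s t -> colimit_edge (dmor D u 0 s) (dmor D u 0 t).
Proof.
move=> [e [ne <- <-]]; exists (dmor D u 1 e).
by rewrite -(smap_d1 (dmor D u)) -(smap_d0 (dmor D u)) colimit_dmor.
Qed.

Lemma colimit_edge_edge k s t : colimit_edge s t -> edge (dob D k) s t.
Proof. by move=> [e [/nondegenerate1_smap ne es et]]; exists e. Qed.

Lemma colimit_edge_lift i (x : sob (dob D i) 0) b :
  edge X (c i 0 x) b ->
  exists k (u : chom J i k) y, c k 0 y = b /\ colimit_edge (dmor D u 0 x) y.
Proof.
move=> [e [ne ex <-]]; have [j [e' e_def]] := colimit_surj e; subst e.
move: ex; rewrite -smap_d1 => /colimit_germ_eq [k [w [u /= wu]]].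
exists k, u, (d0 (dmor D w 1 e')); split; first by rewrite -smap_d0 colimit_dmor smap_d0.
by exists (dmor D w 1 e'); rewrite colimit_dmor -smap_d1 wu.
Qed.

Lemma colimit_path_lift a b : clos_trans _ (edge X) a b ->
  forall i (x : sob (dob D i) 0), c i 0 x = a ->
  exists k (u : chom J i k) y,
    c k 0 y = b /\ clos_trans _ (@colimit_edge k) (dmor D u 0 x) y.
Proof.
move/clos_trans_t1n_iff; elim=> [{}a {}b ab|{}a a' {}b aa' _ IH] i x xa; subst a.
  have [k [u [y [<- xy]]]] := colimit_edge_lift ab.
  by exists k, u, y; split=> //; apply: t_step.
have [m [p [x' [cx' xx']]]] := colimit_edge_lift aa'.
have [k [u [y [<- Cx'y]]]] := IH _ _ cx'.
exists k, (ccomp J u p), y; split=> //; rewrite dmor_comp.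
by apply: t_trans (t_step _ _ _ _ (colimit_edge_dmor u xx')) Cx'y.
Qed.

Lemma filtered_colimit_sacyclic : (forall i, sacyclic (dob D i)) -> sacyclic X.
Proof.
move=> acD; apply/sacyclic_iff => a Caa.
have [i [x ax]] := colimit_surj a.
have [k [u [y [cy Cy]]]] := colimit_path_lift Caa (esym ax).
have : c k 0 y = c k 0 (dmor D u 0 x) by rewrite colimit_dmor cy.
move=> /colimit_germ_eq [l [p [q /= pq]]]; have [l' [r rpq]] := proj2 (proj2 filtJ) _ _ p q.
set z := dmor D (ccomp J r q) 0 (dmor D u 0 x).
have yz : dmor D (ccomp J r p) 0 y = z by rewrite /z !dmor_comp pq.
have xz : dmor D (ccomp J r p) 0 (dmor D u 0 x) = z by rewrite /z rpq.
have Czz : clos_trans _ (@colimit_edge l') z z.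
  by rewrite -{1}xz -yz; apply: clos_trans_map (colimit_edge_dmor (ccomp J r p)) _ _ Cy.
exact: (sacyclic_no_cycle (acD l') (clos_trans_map (F := id) (@colimit_edge_edge l') Czz)).
Qed.

End FilteredColimit.

Theorem mainTheorem1 :
  (* (1) standard simplices *)
  (forall n : nat, sacyclic (Delta n)) /\
  (* (2) subsimplicial sets *)
  (forall (X : sSet) (Y : subsSet X), sacyclic X -> sacyclic (sub_sSet Y)) /\
  (* (3) products *)
  (forall (I : Type) (X : I -> sSet),
      (forall i, sacyclic (X i)) -> sacyclic (prod_sSet X)) /\
  (* (3') consequently: closure under all (small) limits *)
  (forall (J : Cat) (D : sDiagram J) (L : sSet) (p : forall i, sMap L (dob D i)),
      (forall i, sacyclic (dob D i)) -> is_limit p -> sacyclic L) /\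
  (* (4) coproducts *)
  (forall (I : Type) (X : I -> sSet),
      (forall i, sacyclic (X i)) -> sacyclic (coprod_sSet X)) /\
  (* (5) double mapping cylinders *)
  (forall (X Y Z : sSet) (f : sMap X Y) (g : sMap X Z)
          (P : sSet) (jY : sMap Y P) (jZ : sMap Z P) (jC : sMap (prod2 X (Delta 1)) P),
      sacyclic Y -> sacyclic Z ->
      is_double_mapping_cylinder f g jY jZ jC -> sacyclic P) /\
  (* (6) filtered colimits *)
  (forall (J : Cat) (D : sDiagram J) (X : sSet) (c : forall i, sMap (dob D i) X),
      filtered J -> (forall i, sacyclic (dob D i)) -> is_colimit c -> sacyclic X).
Proof.
split; first exact: Delta_sacyclic.
split; first exact: sub_sSet_sacyclic.
split; first exact: prod_sSet_sacyclic.
split; first exact: limit_sacyclic.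
split; first exact: coprod_sSet_sacyclic.
split=> [X Y Z f g P jY jZ jC acY acZ dmc|J D X c filtJ acD colim].
  exact: dmc_sacyclic dmc acY acZ.
exact: (filtered_colimit_sacyclic filtJ colim acD).
Qed.
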